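(* Let $K,L\subset\mathbb{R}^n$ be nonempty compact sets with connected boundaries $\partial K$, $\partial L$, and with $K\cap L\ne\emptyset$. If neither $L$ is strictly contained in $K$ nor $K$ is strictly contained in $L$, then there exists $z\in\partial K\cap\partial L$.
   Context: ''Strictly contained'' means contained and not equal. *)

From HB Require Import structures.
From mathcomp Require Import all_boot all_order all_algebra.
From mathcomp Require Import all_classical all_reals all_analysis.
Set Implicit Arguments. Unset Strict Implicit. Unset Printing Implicit Defensive.
Import Order.TTheory GRing.Theory Num.Theory.
Import numFieldNormedType.Exports.
Local Open Scope classical_set_scope.

Definition boundary {T : topologicalType} (A : set T) : set T :=
  closure A `\` interior A.

(* Suppose bd K and bd L are disjoint. The disjoint open sets L° and ~L cover
   everything outside bd L, so the connected set bd K lies in one of them;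
   likewise bd L lies in K° or outside K. A compact open subset of R^n (n > 0)
   is empty, R^n being connected and unbounded. If bd K is in L° and bd L in K°,
   then K u L = K° u L° is compact, open and nonempty; if both boundaries lie
   outside the other set, so is K n L = K° n L°. In a mixed case K \ L° = K° \ L
   is compact and open, hence empty, so K lies in L, strictly because the
   nonempty bd L misses K. *)
From HB Require Import structures.
From mathcomp Require Import all_boot all_order all_algebra.
From mathcomp Require Import all_classical all_reals all_analysis.
From mathcomp Require Import lra.
Set Implicit Arguments. Unset Strict Implicit. Unset Printing Implicit Defensive.
Import Order.TTheory GRing.Theory Num.Theory.
Import numFieldNormedType.Exports.
Local Open Scope classical_set_scope.
Local Open Scope ring_scope.

Section boundary_topology.
Variable T : topologicalType.
Implicit Types A K L : set T.

Lemma subset_interiorU_boundary A : A `<=` A° `|` boundary A.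
Proof.
move=> x Ax; have [|nAx] := pselect (A° x); first by left.
by right; split => //; exact: subset_closure.
Qed.

Lemma closed_boundary_subset A : closed A -> boundary A `<=` A.
Proof. by rewrite /boundary => /closure_id <- x []. Qed.

Lemma interior_separated_setC A : closed A -> separated A° (~` A).
Proof.
move=> cA; split; last by rewrite closure_setC setICr.
apply/disjoints_subset; rewrite setCK.
by apply: subset_trans (closureS (@interior_subset _ A)) _; rewrite -(closure_id A).1.
Qed.

Lemma connected_boundary_subset_interior_or_setC K L :
  closed L -> connected (boundary K) -> boundary K `&` boundary L = set0 ->
  boundary K `<=` L° \/ boundary K `<=` ~` L.
Proof.
move=> cL dK dKL; apply: connected_subset (interior_separated_setC cL) _ dK.
move=> x dKx; have [/subset_interiorU_boundary[|dLx]|] := pselect (L x).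
- by left.
- by move: dKL => /seteqP[/(_ x (conj dKx dLx))].
- by right.
Qed.

Lemma connectedT_clopen A : connected [set: T] -> clopen A ->
  A = set0 \/ A = setT.
Proof.
move=> dT [oA cA]; have [A0|/nonemptyPn] := pselect (A !=set0); last by left.
by right; apply: dT => //; [exists A|exists A]; rewrite // setTI.
Qed.

Lemma boundary_subset_interiors_openU K L :
  boundary K `<=` L° -> boundary L `<=` K° -> open (K `|` L).
Proof.
move=> dKL dLK; suff -> : K `|` L = K° `|` L° by apply: openU; exact: open_interior.
apply/seteqP; split => x; last by case=> /interior_subset; [left|right].
case=> /subset_interiorU_boundary[]; by [left|move/dKL; right|right|move/dLK; left].
Qed.

Lemma boundary_subset_exteriors_openI K L :
  boundary K `<=` ~` L -> boundary L `<=` ~` K -> open (K `&` L).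
Proof.
move=> dKL dLK; suff -> : K `&` L = K° `&` L° by apply: openI; exact: open_interior.
apply/seteqP; split => x; last by case=> /interior_subset Kx /interior_subset.
case=> Kx Lx; split.
- by have [//|/dKL] := subset_interiorU_boundary Kx.
- by have [//|/dLK] := subset_interiorU_boundary Lx.
Qed.

Lemma boundary_subset_interior_exterior_openD K L : closed L ->
  boundary K `<=` L° -> boundary L `<=` ~` K -> open (K `\` L°).
Proof.
move=> cL dKL dLK; suff -> : K `\` L° = K° `\` L.
  by apply: openI; [exact: open_interior|exact: closed_openC].
apply/seteqP; split => x [Kx nLx]; last first.
  by split; [exact: interior_subset | move/interior_subset].
split; first by have [//|/dKL] := subset_interiorU_boundary Kx.
by move=> /subset_interiorU_boundary[//|/dLK].
Qed.

End boundary_topology.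

Section normed_boundary.
Variables (R : realType) (V : normedModType R).
Implicit Types A K L : set V.

Lemma connectedT : connected [set: V].
Proof.
have -> : [set: V] = \bigcup_(v in setT) [set t *: v | t in `[0%R, 1%R]].
  apply/seteqP; split => // v _; exists v => //; exists 1%R; last exact: scale1r.
  by rewrite /= in_itv /= lexx ler01.
apply: bigcup_connected.
  exists 0 => v _; exists 0%R; last exact: scale0r.
  by rewrite /= in_itv /= lexx ler01.
move=> v _; apply: connected_continuous_connected; first exact: segment_connected.
exact/continuous_subspaceT/scalel_continuous.
Qed.

Variable v : V.
Hypothesis v_neq0 : v != 0.

Lemma not_compactT : ~ compact [set: V].
Proof.
move=> /compact_bounded[M [_ MT]].
have v_gt0 : 0 < `|v| by rewrite normr_gt0.
have M1 : M < `|M| + 1 by rewrite (le_lt_trans (ler_norm M)) // ltrDl.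
have /= := MT _ M1 ((`|M| + 2) / `|v| *: v) I.
rewrite normrZ ger0_norm ?divr_gones_neq0 // ?addr_gones_neq0 // mulfVK ?gt_eqF //.
lra.
Qed.

Lemma compact_open_eq0 A : compact A -> open A -> A = set0.
Proof.
move=> cA oA.
have clA := compact_closed (@norm_hausdorff _ _) cA.
have [//|AT] := connectedT_clopen connectedT (conj oA clA).
by have := not_compactT; rewrite -AT.
Qed.

Lemma compact_boundary_neq0 A : compact A -> A !=set0 ->
  boundary A !=set0.
Proof.
move=> cA [a Aa]; apply: contrapT => /nonemptyPn dA0.
suff A0 : A = set0 by rewrite A0 in Aa.
apply: compact_open_eq0 cA _.
suff -> : A = A° by exact: open_interior.
apply/seteqP; split; last exact: interior_subset.
by move=> x /subset_interiorU_boundary[//|]; rewrite dA0.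
Qed.

Lemma boundary_subset_interior_exterior_proper K L :
  compact K -> compact L -> L !=set0 ->
  boundary K `<=` L° -> boundary L `<=` ~` K -> K `<` L.
Proof.
move=> cK cL L0 dKL dLK; have clL := compact_closed (@norm_hausdorff _ _) cL.
have KL0 : K `\` L° = set0.
  apply: compact_open_eq0 _ (boundary_subset_interior_exterior_openD clL dKL dLK).
  exact: compact_closedI cK (open_closedC (@open_interior _ L)).
split.
  move=> x Kx; apply: interior_subset; apply: contrapT => nLx.
  by move/seteqP: KL0 => [/(_ x (conj Kx nLx))].
have [y dLy] := compact_boundary_neq0 cL L0.
by move=> /(_ y (closed_boundary_subset clL dLy)); exact: dLK.
Qed.

End normed_boundary.

Theorem lemma15 (R : realType) (n : nat) (hn : (0 < n)%N)
  (K L : set 'rV[R]_n) :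
  K !=set0 -> L !=set0 -> compact K -> compact L ->
  connected (boundary K) -> connected (boundary L) ->
  K `&` L !=set0 ->
  ~ (L `<` K) -> ~ (K `<` L) ->
  exists z, boundary K z /\ boundary L z.
Proof.
move=> K0 L0 cK cL dK dL KL0 nLK nKL.
apply: contrapT => /nonemptyPn dKL.
have ones_neq0 : const_mx 1 != 0 :> 'rV[R]_n.
  by apply/eqP => /matrixP/(_ ord0 (Ordinal hn)); rewrite !mxE; apply/eqP; exact: oner_neq0.
have clK := compact_closed (@norm_hausdorff _ _) cK.
have clL := compact_closed (@norm_hausdorff _ _) cL.
have dLK : boundary L `&` boundary K = set0 by rewrite setIC.
have [sK|sK] := connected_boundary_subset_interior_or_setC clL dK dKL;
have [sL|sL] := connected_boundary_subset_interior_or_setC clK dL dLK.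
- have := compact_open_eq0 ones_neq0 (compactU cK cL) (boundary_subset_interiors_openU sK sL).
  by case: K0 => x Kx /seteqP[/(_ x (or_introl Kx))].
- exact: nKL (boundary_subset_interior_exterior_proper ones_neq0 cK cL L0 sK sL).
- exact: nLK (boundary_subset_interior_exterior_proper ones_neq0 cL cK K0 sL sK).
- have := compact_open_eq0 ones_neq0 (compact_closedI cK clL) (boundary_subset_exteriors_openI sK sL).
  by case: KL0 => x KLx /seteqP[/(_ x KLx)].
Qed.
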